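(* Let $n\ge 4$ and for $j=1,\ldots,n-1$ let $\xi_j\in\mathbb R^{n-1}$ be the vector whose $i$-th entry ($i=1,\ldots,n-1$) is $\cos\frac{(i-1)(2j-1)\pi}{2(n-1)}$; let $e$ be the all-ones vector of length $n-1$. If $n\not\equiv 0\pmod 4$, then $\prod_{j=1}^{n-1}e^{T}\xi_j=\pm 2^{1-\lceil n/2\rceil}\neq 0$. If $n\equiv 0\pmod 4$, then $e^{T}\xi_{n/2}=0$ and $e^{T}\xi_j\neq 0$ for every $j\in\{1,\ldots,n-1\}\setminus\{n/2\}$. *)

From Stdlib Require Import Reals Lra Lia Arith.
Open Scope R_scope.

Definition xi (n j i : nat) : R :=
  cos (INR (i - 1) * INR (2 * j - 1) * PI / (2 * INR (n - 1))).

Definition eTxi (n j : nat) : R :=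
  sum_f 1 (n - 1) (fun i => xi n j i).

Fixpoint prod_from1 (m : nat) (f : nat -> R) : R :=
  match m with
  | O => 1
  | S k => prod_from1 k f * f (S k)
  end.

Definition ceil_half (n : nat) : nat := Nat.div (n + 1) 2.

(* Write m = n - 1, a_j = (2j - 1) PI / (4m) and s_j = (-1)^(j-1).  Summing the
   Dirichlet kernel gives e^T xi_j = (1 + s_j cot a_j) / 2, and j <-> m + 1 - j
   exchanges a_j with PI/2 - a_j.
   - m even: each such pair contributes +-cot (2 a_j) / 2, and the cotangents
     cancel since the angles 2 a_j come in pairs x, PI/2 - x; so the product
     is +-2^(-m/2).
   - m = 4g + 1: the middle factor (a = PI/4) is 1, and the pair with
     j = 2g + 1 - k contributes (cos (k PI/m) + (-1)^k) / (2 cos (k PI/m)).  By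
     the half-angle formulas the absolute product of these is
     prod_(k <= 2g) cos (k PI/m), which equals 2^(-2g) by the doubling trick
     2 sin x cos x = sin 2x.
   - m = 4t - 1: a factor vanishes iff s_j = -1 and a_j = PI/4, i.e. j = 2t. *)

From Stdlib Require Import Reals Lra Lia Arith.
Open Scope R_scope.

Lemma prod_from1_ext a f g :
  (forall k, (1 <= k <= a)%nat -> f k = g k) -> prod_from1 a f = prod_from1 a g.
Proof.
  induction a as [|a IH]; intros H; simpl; [reflexivity|].
  rewrite IH by (intros; apply H; lia).
  rewrite H by lia; reflexivity.
Qed.

Lemma prod_from1_mul a f g :
  prod_from1 a (fun k => f k * g k) = prod_from1 a f * prod_from1 a g.
Proof. induction a as [|a IH]; simpl; [ring|]. rewrite IH; ring. Qed.

Lemma prod_from1_div a f g :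
  prod_from1 a (fun k => f k / g k) = prod_from1 a f / prod_from1 a g.
Proof.
  induction a as [|a IH]; simpl; [field|].
  rewrite IH. unfold Rdiv. rewrite Rinv_mult. ring.
Qed.

Lemma prod_from1_const a c : prod_from1 a (fun _ => c) = c ^ a.
Proof. induction a as [|a IH]; simpl; [reflexivity|]. rewrite IH; ring. Qed.

Lemma Rabs_prod_from1 a f : Rabs (prod_from1 a f) = prod_from1 a (fun k => Rabs (f k)).
Proof.
  induction a as [|a IH]; simpl; [apply Rabs_R1|].
  rewrite Rabs_mult, IH; reflexivity.
Qed.

Lemma prod_from1_pos a f :
  (forall k, (1 <= k <= a)%nat -> 0 < f k) -> 0 < prod_from1 a f.
Proof.
  induction a as [|a IH]; intros H; simpl; [lra|].
  apply Rmult_lt_0_compat; [apply IH; intros k Hk|]; apply H; lia.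
Qed.

Lemma prod_from1_add a b f :
  prod_from1 (a + b) f = prod_from1 a f * prod_from1 b (fun i => f (a + i)%nat).
Proof.
  induction b as [|b IH]; simpl.
  - rewrite Nat.add_0_r; ring.
  - rewrite <- plus_n_Sm; simpl. rewrite IH; ring.
Qed.

Lemma prod_from1_rev a f : prod_from1 a f = prod_from1 a (fun i => f (a + 1 - i)%nat).
Proof.
  revert f; induction a as [|a IH]; intros f; [reflexivity|].
  change (prod_from1 (S a) f) with (prod_from1 a f * f (S a)).
  replace (S a) with (1 + a)%nat at 2 by lia.
  rewrite prod_from1_add, (IH f). simpl.
  replace (a + 1 - 0)%nat with (S a) by lia.
  ring.
Qed.

Lemma prod_from1_add_rev h f :
  prod_from1 (h + h) f = prod_from1 h f * prod_from1 h (fun i => f (2 * h + 1 - i)%nat).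
Proof.
  rewrite prod_from1_add, (prod_from1_rev h (fun i => f (h + i)%nat)).
  f_equal. apply prod_from1_ext; intros k Hk. f_equal; lia.
Qed.

Lemma prod_from1_fold h f :
  prod_from1 (h + h) f = prod_from1 h (fun j => f j * f (2 * h + 1 - j)%nat).
Proof. rewrite prod_from1_add_rev, prod_from1_mul; reflexivity. Qed.

Lemma prod_from1_fold_mid h f :
  prod_from1 (h + 1 + h) f = f (h + 1)%nat * prod_from1 h (fun j => f j * f (2 * h + 2 - j)%nat).
Proof.
  rewrite prod_from1_add, prod_from1_mul, (prod_from1_rev h (fun i => f (h + 1 + i)%nat)).
  replace (prod_from1 (h + 1) f) with (prod_from1 h f * f (h + 1)%nat)
    by (rewrite Nat.add_1_r; reflexivity).
  replace (prod_from1 h (fun i => f (h + 1 + (h + 1 - i))%nat))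
    with (prod_from1 h (fun j => f (2 * h + 2 - j)%nat))
    by (apply prod_from1_ext; intros k Hk; f_equal; lia).
  ring.
Qed.

Lemma prod_from1_even_odd g f :
  prod_from1 (2 * g) f =
  prod_from1 g (fun i => f (2 * i)%nat) * prod_from1 g (fun i => f (2 * i - 1)%nat).
Proof.
  induction g as [|g IH]; [simpl; ring|].
  replace (2 * S g)%nat with (S (S (2 * g))) by lia.
  cbn [prod_from1]. rewrite IH.
  replace (2 * S g - 1)%nat with (S (2 * g)) by lia.
  replace (2 * S g)%nat with (S (S (2 * g))) by lia.
  ring.
Qed.

Lemma two_sin_half_mul_sum_cos th N :
  2 * sin (th / 2) * sum_f_R0 (fun i => cos (INR i * th)) N =
  sin ((2 * INR N + 1) * th / 2) + sin (th / 2).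
Proof.
  induction N as [|N IH].
  - simpl. rewrite Rmult_0_l, cos_0.
    replace ((2 * 0 + 1) * th / 2) with (th / 2) by field. ring.
  - cbn [sum_f_R0]. rewrite Rmult_plus_distr_l, IH, S_INR.
    replace ((2 * (INR N + 1) + 1) * th / 2) with ((INR N + 1) * th + th / 2) by field.
    replace ((2 * INR N + 1) * th / 2) with ((INR N + 1) * th - th / 2) by field.
    rewrite sin_plus, sin_minus. ring.
Qed.

Lemma cos_sub_INR_PI a k : cos (a - INR k * PI) = (-1) ^ k * cos a.
Proof.
  induction k as [|k IH].
  - simpl. rewrite Rmult_0_l, Rminus_0_r. ring.
  - rewrite S_INR. replace (a - (INR k + 1) * PI) with ((a - INR k * PI) - PI) by ring.
    rewrite cos_minus, cos_PI, sin_PI, IH. simpl. ring.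
Qed.

Lemma pow_m1_cases k : (-1) ^ k = 1 \/ (-1) ^ k = -1.
Proof.
  destruct (Nat.Even_or_Odd k) as [[l ->] | [l ->]].
  - left; apply pow_1_even.
  - right. rewrite Nat.add_1_r. apply pow_1_odd.
Qed.

Lemma pow_m1_congr a b : Nat.Even (a + b) -> (-1) ^ a = (-1) ^ b.
Proof.
  intros [k Hk].
  assert (Hab : (-1) ^ a * (-1) ^ b = 1) by (rewrite <- pow_add, Hk; apply pow_1_even).
  destruct (pow_m1_cases b) as [Hb | Hb]; rewrite Hb in *; lra.
Qed.

(* With [m = n - 1], [xi n j i = cos (2 (i - 1) alpha m j)]. *)
Definition alpha (m j : nat) : R := INR (2 * j - 1) * PI / (4 * INR m).

Definition alt_sign (j : nat) : R := (-1) ^ (j - 1).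

Lemma alt_sign_cases j : alt_sign j = 1 \/ alt_sign j = -1.
Proof. apply pow_m1_cases. Qed.

Lemma Rabs_alt_sign j : Rabs (alt_sign j) = 1.
Proof.
  destruct (alt_sign_cases j) as [-> | ->]; [apply Rabs_R1|].
  rewrite Rabs_left; lra.
Qed.

Lemma alt_sign_reflect m j :
  (1 <= j <= m)%nat -> alt_sign (m + 1 - j) = (-1) ^ (m - 1) * alt_sign j.
Proof.
  intros Hj. unfold alt_sign. rewrite <- pow_add.
  apply pow_m1_congr. exists (m - 1)%nat. lia.
Qed.

Lemma INR_odd j : (1 <= j)%nat -> INR (2 * j - 1) = 2 * INR j - 1.
Proof. intros Hj. rewrite minus_INR, mult_INR by lia. simpl. ring. Qed.

Lemma alpha_bounds m j : (1 <= j <= m)%nat -> 0 < alpha m j < PI / 2.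
Proof.
  intros Hj. unfold alpha. rewrite INR_odd by lia.
  assert (1 <= INR j) by (apply (le_INR 1); lia).
  assert (INR j <= INR m) by (apply le_INR; lia).
  pose proof PI_RGT_0.
  split.
  - apply Rdiv_lt_0_compat; nra.
  - apply Rmult_lt_reg_r with (4 * INR m); [lra|].
    field_simplify; nra.
Qed.

Lemma double_alpha m j : (1 <= m)%nat -> 2 * alpha (2 * m) j = alpha m j.
Proof.
  intros Hm. unfold alpha. rewrite mult_INR. simpl INR.
  assert (0 < INR m) by (apply lt_0_INR; lia). field. lra.
Qed.

Lemma sin_cos_alpha_pos m j :
  (1 <= j <= m)%nat -> 0 < sin (alpha m j) /\ 0 < cos (alpha m j).
Proof.
  intros Hj. pose proof (alpha_bounds m j Hj).
  split; [apply sin_gt_0 | apply cos_gt_0]; lra.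
Qed.

Lemma alpha_reflect m j : (1 <= j <= m)%nat -> alpha m (m + 1 - j) = PI / 2 - alpha m j.
Proof.
  intros Hj. unfold alpha. rewrite !INR_odd, minus_INR, plus_INR by lia. simpl INR.
  assert (0 < INR m) by (apply lt_0_INR; lia). field. lra.
Qed.

Lemma eTxi_as_cos_sum m j :
  (1 <= m)%nat -> eTxi (S m) j = sum_f_R0 (fun i => cos (INR i * (2 * alpha m j))) (m - 1).
Proof.
  intros Hm. unfold eTxi, sum_f, xi.
  replace (S m - 1 - 1)%nat with (m - 1)%nat by lia.
  apply sum_eq. intros i _.
  replace (i + 1 - 1)%nat with i by lia. replace (S m - 1)%nat with m by lia.
  unfold alpha. f_equal.
  assert (0 < INR m) by (apply lt_0_INR; lia). field. lra.
Qed.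

(* Dirichlet's kernel. *)
Lemma eTxi_closed_form m j : (1 <= j <= m)%nat ->
  eTxi (S m) j =
  (sin (alpha m j) + alt_sign j * cos (alpha m j)) / (2 * sin (alpha m j)).
Proof.
  intros Hj. destruct (sin_cos_alpha_pos m j Hj) as [Hs _].
  set (a := alpha m j) in *.
  assert (Hsum : 2 * sin a * eTxi (S m) j = sin a + alt_sign j * cos a).
  { rewrite eTxi_as_cos_sum by lia. fold a.
    replace (sin a) with (sin (2 * a / 2)) at 1 by (f_equal; field).
    rewrite two_sin_half_mul_sum_cos.
    replace (2 * a / 2) with a by field.
    replace ((2 * INR (m - 1) + 1) * (2 * a) / 2) with (PI / 2 - (a - INR (j - 1) * PI)).
    - rewrite sin_shift, cos_sub_INR_PI. unfold alt_sign. ring.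
    - unfold a, alpha. rewrite !minus_INR, mult_INR by lia. simpl INR.
      assert (0 < INR m) by (apply lt_0_INR; lia). field. lra. }
  rewrite <- Hsum. field. lra.
Qed.

Lemma eTxi_mul_reflect m j : (1 <= j <= m)%nat ->
  eTxi (S m) j * eTxi (S m) (m + 1 - j) =
  (sin (alpha m j) + alt_sign j * cos (alpha m j)) *
  (cos (alpha m j) + (-1) ^ (m - 1) * alt_sign j * sin (alpha m j)) /
  (4 * sin (alpha m j) * cos (alpha m j)).
Proof.
  intros Hj.
  rewrite (eTxi_closed_form m j), (eTxi_closed_form m (m + 1 - j)) by lia.
  rewrite alpha_reflect, alt_sign_reflect, sin_shift, cos_shift by lia.
  destruct (sin_cos_alpha_pos m j Hj). field. lra.
Qed.

Lemma eTxi_mul_reflect_even m j : Nat.Even m -> (1 <= j <= m)%nat ->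
  eTxi (S m) j * eTxi (S m) (m + 1 - j) =
  alt_sign j * cos (2 * alpha m j) / (2 * sin (2 * alpha m j)).
Proof.
  intros Hm Hj.
  assert (Hsign : (-1) ^ (m - 1) = -1).
  { rewrite (pow_m1_congr (m - 1) 1); [simpl; ring|].
    now replace (m - 1 + 1)%nat with m by lia. }
  rewrite eTxi_mul_reflect, Hsign, sin_2a, cos_2a by lia.
  destruct (sin_cos_alpha_pos m j Hj).
  destruct (alt_sign_cases j) as [-> | ->]; field; lra.
Qed.

Lemma eTxi_mul_reflect_odd m j : Nat.Odd m -> (1 <= j <= m)%nat ->
  eTxi (S m) j * eTxi (S m) (m + 1 - j) =
  (sin (2 * alpha m j) + alt_sign j) / (2 * sin (2 * alpha m j)).
Proof.
  intros [k Hk] Hj.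
  assert (Hsign : (-1) ^ (m - 1) = 1).
  { rewrite (pow_m1_congr (m - 1) 0); [reflexivity|]. exists k. lia. }
  rewrite eTxi_mul_reflect, Hsign, sin_2a by lia.
  destruct (sin_cos_alpha_pos m j Hj).
  pose proof (sin2_cos2 (alpha m j)) as Hpyth. unfold Rsqr in Hpyth.
  assert (Hnum : (sin (alpha m j) + alt_sign j * cos (alpha m j)) *
                 (cos (alpha m j) + 1 * alt_sign j * sin (alpha m j)) =
                 2 * sin (alpha m j) * cos (alpha m j) + alt_sign j)
    by (destruct (alt_sign_cases j) as [-> | ->]; lra).
  rewrite Hnum. field. lra.
Qed.

Lemma alpha_quarter m j : (1 <= j)%nat -> (2 * j - 1)%nat = m -> alpha m j = PI / 4.
Proof.
  intros Hj Hm. unfold alpha. rewrite Hm.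
  assert (0 < INR m) by (apply lt_0_INR; lia). field. lra.
Qed.

Lemma eTxi_quarter m j :
  (1 <= j)%nat -> (2 * j - 1)%nat = m -> eTxi (S m) j = (1 + alt_sign j) / 2.
Proof.
  intros Hj Hm.
  destruct (sin_cos_alpha_pos m j ltac:(lia)) as [Hs _].
  rewrite eTxi_closed_form by lia.
  rewrite alpha_quarter in * by assumption.
  rewrite <- sin_cos_PI4. field. lra.
Qed.

Lemma quarter_of_sin_eq_cos a : 0 < a < PI / 2 -> sin a = cos a -> a = PI / 4.
Proof.
  intros Ha Hsc. pose proof PI_RGT_0.
  rewrite <- sin_shift in Hsc.
  destruct (Rtotal_order a (PI / 4)) as [Hlt | [Heq | Hgt]]; [exfalso | exact Heq | exfalso].
  - assert (sin a < sin (PI / 2 - a)) by (apply sin_increasing_1; lra). lra.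
  - assert (sin (PI / 2 - a) < sin a) by (apply sin_increasing_1; lra). lra.
Qed.

Lemma eTxi_eq0_middle m j : (1 <= j <= m)%nat -> eTxi (S m) j = 0 -> (2 * j - 1)%nat = m.
Proof.
  intros Hj H0. rewrite eTxi_closed_form in H0 by lia.
  destruct (sin_cos_alpha_pos m j Hj) as [Hs Hc].
  assert (Hnum : sin (alpha m j) + alt_sign j * cos (alpha m j) = 0).
  { rewrite <- (Rmult_0_l (2 * sin (alpha m j))), <- H0. field. lra. }
  destruct (alt_sign_cases j) as [Hsg | Hsg]; rewrite Hsg in Hnum; [lra|].
  assert (Ha : alpha m j = PI / 4).
  { apply quarter_of_sin_eq_cos; [apply alpha_bounds, Hj | lra]. }
  apply INR_eq. pose proof PI_RGT_0.
  assert (0 < INR m) by (apply lt_0_INR; lia).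
  replace (INR (2 * j - 1)) with (alpha m j * (4 * INR m) / PI) by (unfold alpha; field; lra).
  rewrite Ha. field. lra.
Qed.

Lemma Rabs_prod_eTxi_odd h : (1 <= h)%nat ->
  Rabs (prod_from1 (2 * h) (eTxi (S (2 * h)))) = (/ 2) ^ h.
Proof.
  intros Hh. assert (Heven : Nat.Even (2 * h)) by (exists h; reflexivity).
  replace (prod_from1 (2 * h)) with (prod_from1 (h + h)) by (f_equal; lia).
  rewrite prod_from1_fold, Rabs_prod_from1.
  rewrite (prod_from1_ext h _ (fun j => cos (alpha h j) / (2 * sin (alpha h j)))).
  2:{ intros j Hj. destruct (sin_cos_alpha_pos h j Hj).
      rewrite eTxi_mul_reflect_even, double_alpha by (auto; lia).
      unfold Rdiv. rewrite Rmult_assoc, Rabs_mult, Rabs_alt_sign, Rmult_1_l.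
      apply Rabs_pos_eq. apply Rlt_le, Rmult_lt_0_compat; [|apply Rinv_0_lt_compat]; lra. }
  assert (Hcs : prod_from1 h (fun j => cos (alpha h j)) =
                prod_from1 h (fun j => sin (alpha h j))).
  { rewrite prod_from1_rev. apply prod_from1_ext; intros j Hj.
    rewrite alpha_reflect, cos_shift by lia. reflexivity. }
  assert (Hpos : 0 < prod_from1 h (fun j => sin (alpha h j))).
  { apply prod_from1_pos; intros j Hj; apply sin_cos_alpha_pos; lia. }
  rewrite prod_from1_div, prod_from1_mul, prod_from1_const, Hcs, pow_inv.
  field. split; [apply pow_nonzero | ]; lra.
Qed.

Section TwoModFour.

Variable g : nat.

Let m := (4 * g + 1)%nat.

Let c (k : nat) : R := cos (INR k * PI / INR m).

Lemma INR_m : INR m = 4 * INR g + 1.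
Proof. unfold m. rewrite plus_INR, mult_INR. simpl. ring. Qed.

Lemma frac_PI_bounds k : (k <= 2 * g)%nat -> 0 <= INR k * PI / INR m < PI / 2.
Proof.
  intros Hk. rewrite INR_m.
  assert (0 <= INR k) by apply pos_INR.
  assert (INR k <= 2 * INR g)
    by (replace (2 * INR g) with (INR (2 * g)) by (rewrite mult_INR; simpl; ring);
        apply le_INR; lia).
  pose proof PI_RGT_0. pose proof (pos_INR g).
  split.
  - apply Rmult_le_pos; [nra|]. apply Rlt_le, Rinv_0_lt_compat; lra.
  - apply Rmult_lt_reg_r with (4 * INR g + 1); [lra|]. field_simplify; nra.
Qed.

Lemma cos_frac_PI_pos k : (k <= 2 * g)%nat -> 0 < c k.
Proof. intros Hk. pose proof (frac_PI_bounds k Hk). apply cos_gt_0; unfold c; lra. Qed.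

Lemma prod_cos_frac_PI : prod_from1 (2 * g) c = (/ 2) ^ (2 * g).
Proof.
  set (s k := sin (INR k * PI / INR m)).
  assert (Hs : 0 < prod_from1 (2 * g) s).
  { apply prod_from1_pos. intros k Hk. pose proof (frac_PI_bounds k ltac:(lia)).
    apply sin_gt_0; [|lra]. unfold Rdiv.
    apply Rmult_lt_0_compat; [apply Rmult_lt_0_compat; [apply lt_0_INR; lia | apply PI_RGT_0]|].
    apply Rinv_0_lt_compat, lt_0_INR; unfold m; lia. }
  assert (Hdouble : prod_from1 (2 * g) (fun k => c k * s k) =
                    (/ 2) ^ (2 * g) * prod_from1 (2 * g) (fun k => s (2 * k)%nat)).
  { rewrite <- prod_from1_const, <- prod_from1_mul. apply prod_from1_ext; intros k Hk.
    unfold c, s.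
    replace (INR (2 * k) * PI / INR m) with (2 * (INR k * PI / INR m))
      by (rewrite mult_INR, INR_m; simpl; field; pose proof (pos_INR g); lra).
    rewrite sin_2a. field. }
  (* [k |-> 2k], folded back by [sin (PI - x) = sin x], permutes [1..2g]. *)
  assert (Hperm : prod_from1 (2 * g) (fun k => s (2 * k)%nat) = prod_from1 (2 * g) s).
  { replace (prod_from1 (2 * g) (fun k => s (2 * k)%nat))
      with (prod_from1 (g + g) (fun k => s (2 * k)%nat)) by (f_equal; lia).
    rewrite prod_from1_add_rev, (prod_from1_even_odd g s). f_equal.
    apply prod_from1_ext; intros i Hi. unfold s. rewrite <- sin_PI_x. f_equal.
    rewrite mult_INR, !minus_INR, !plus_INR, !mult_INR, INR_m by lia. simpl INR.
    field. pose proof (pos_INR g); lra. }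
  rewrite prod_from1_mul, Hperm in Hdouble.
  apply Rmult_eq_reg_r with (prod_from1 (2 * g) s); lra.
Qed.

Lemma eTxi_middle_2mod4 : eTxi (S m) (2 * g + 1) = 1.
Proof.
  rewrite eTxi_quarter by (unfold m; lia).
  unfold alt_sign. replace (2 * g + 1 - 1)%nat with (2 * g)%nat by lia.
  rewrite pow_1_even. field.
Qed.

Let pair_term (k : nat) : R := (c k + (-1) ^ k) / (2 * c k).

Lemma eTxi_mul_reflect_pair_term k : (1 <= k <= 2 * g)%nat ->
  eTxi (S m) (2 * g + 1 - k) * eTxi (S m) (m + 1 - (2 * g + 1 - k)) = pair_term k.
Proof.
  intros Hk.
  assert (Hodd : Nat.Odd m) by (exists (2 * g)%nat; unfold m; lia).
  rewrite eTxi_mul_reflect_odd by (auto; unfold m; lia).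
  assert (Hangle : 2 * alpha m (2 * g + 1 - k) = PI / 2 - INR k * PI / INR m).
  { unfold alpha. rewrite INR_odd, minus_INR, plus_INR, mult_INR, INR_m by lia. simpl INR.
    field. pose proof (pos_INR g); lra. }
  assert (Hsign : alt_sign (2 * g + 1 - k) = (-1) ^ k).
  { unfold alt_sign. apply pow_m1_congr. exists g. lia. }
  rewrite Hangle, sin_shift, Hsign. reflexivity.
Qed.

Lemma pair_term_even i : (1 <= i <= g)%nat -> pair_term (2 * i) = c i * c i / c (2 * i).
Proof.
  intros Hi. pose proof (cos_frac_PI_pos (2 * i) ltac:(lia)).
  assert (Hc : c (2 * i) = 2 * c i * c i - 1).
  { unfold c. rewrite <- cos_2a_cos. f_equal.
    rewrite mult_INR, INR_m. simpl. field. pose proof (pos_INR g); lra. }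
  unfold pair_term. rewrite pow_1_even. rewrite Hc in *. field. lra.
Qed.

Lemma pair_term_odd i : (1 <= i <= g)%nat ->
  pair_term (2 * i - 1) = - (c (2 * g + 1 - i) * c (2 * g + 1 - i) / c (2 * i - 1)).
Proof.
  intros Hi. pose proof (cos_frac_PI_pos (2 * i - 1) ltac:(lia)).
  assert (Hc : c (2 * i - 1) = 1 - 2 * c (2 * g + 1 - i) * c (2 * g + 1 - i)).
  { unfold c. set (z := INR (2 * i - 1) * PI / (2 * INR m)).
    assert (0 < INR m) by (rewrite INR_m; pose proof (pos_INR g); lra).
    replace (INR (2 * i - 1) * PI / INR m) with (2 * z) by (unfold z; field; lra).
    replace (INR (2 * g + 1 - i) * PI / INR m) with (PI / 2 - z).
    - rewrite cos_shift, cos_2a_sin. ring.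
    - unfold z. rewrite !minus_INR, plus_INR, !mult_INR, INR_m by lia. simpl INR.
      field. pose proof (pos_INR g); lra. }
  unfold pair_term. replace ((-1) ^ (2 * i - 1)) with (-1).
  - rewrite Hc in *. field. lra.
  - replace (2 * i - 1)%nat with (S (2 * (i - 1))) by lia. symmetry; apply pow_1_odd.
Qed.

Lemma Rabs_prod_eTxi_2mod4 : Rabs (prod_from1 m (eTxi (S m))) = (/ 2) ^ (2 * g).
Proof.
  replace (prod_from1 m) with (prod_from1 (2 * g + 1 + 2 * g)) by (f_equal; unfold m; lia).
  rewrite prod_from1_fold_mid, eTxi_middle_2mod4, Rmult_1_l, prod_from1_rev.
  rewrite (prod_from1_ext (2 * g) _ pair_term).
  2:{ intros k Hk. rewrite <- (eTxi_mul_reflect_pair_term k Hk). do 3 f_equal. unfold m; lia. }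
  rewrite Rabs_prod_from1, prod_from1_even_odd, <- prod_from1_mul.
  rewrite (prod_from1_ext g _ (fun i => c i * c (2 * g + 1 - i) * (c i * c (2 * g + 1 - i)) /
                                        (c (2 * i) * c (2 * i - 1)))).
  2:{ intros i Hi.
      pose proof (cos_frac_PI_pos i ltac:(lia)).
      pose proof (cos_frac_PI_pos (2 * g + 1 - i) ltac:(lia)).
      pose proof (cos_frac_PI_pos (2 * i) ltac:(lia)).
      pose proof (cos_frac_PI_pos (2 * i - 1) ltac:(lia)).
      rewrite pair_term_even, pair_term_odd, Rabs_Ropp by lia.
      rewrite !Rabs_pos_eq
        by (apply Rlt_le, Rdiv_lt_0_compat; [apply Rmult_lt_0_compat|]; lra).
      field. lra. }
  rewrite prod_from1_div, !prod_from1_mul, <- prod_from1_add_rev, <- prod_from1_even_odd.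
  replace (g + g)%nat with (2 * g)%nat by lia.
  rewrite prod_cos_frac_PI. field. apply pow_nonzero; lra.
Qed.

End TwoModFour.

Lemma powerRZ_2_one_minus k : powerRZ 2 (1 - Z.of_nat (k + 1)) = (/ 2) ^ k.
Proof.
  replace (1 - Z.of_nat (k + 1))%Z with (- Z.of_nat k)%Z by lia.
  rewrite powerRZ_neg', <- pow_powerRZ, pow_inv. reflexivity.
Qed.

Lemma ceil_half_odd h : ceil_half (2 * h + 1) = (h + 1)%nat.
Proof. unfold ceil_half. symmetry. apply (Nat.div_unique _ _ _ 0); lia. Qed.

Lemma ceil_half_2mod4 g : ceil_half (4 * g + 2) = (2 * g + 1)%nat.
Proof. unfold ceil_half. symmetry. apply (Nat.div_unique _ _ _ 1); lia. Qed.

Lemma Rabs_prod_eTxi_not0mod4 n : (4 <= n)%nat -> Nat.modulo n 4 <> 0%nat ->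
  Rabs (prod_from1 (n - 1) (eTxi n)) = powerRZ 2 (1 - Z.of_nat (ceil_half n)).
Proof.
  intros Hn Hmod.
  destruct (Nat.Even_or_Odd n) as [[k Hk] | [h ->]].
  - pose proof (Nat.div_mod_eq n 4). pose proof (Nat.mod_upper_bound n 4 ltac:(lia)).
    set (g := (n / 4)%nat) in *. clearbody g.
    replace n with (4 * g + 2)%nat by lia.
    rewrite ceil_half_2mod4, powerRZ_2_one_minus.
    replace (4 * g + 2 - 1)%nat with (4 * g + 1)%nat by lia.
    replace (4 * g + 2)%nat with (S (4 * g + 1)) by lia.
    apply Rabs_prod_eTxi_2mod4.
  - rewrite ceil_half_odd, powerRZ_2_one_minus.
    replace (2 * h + 1 - 1)%nat with (2 * h)%nat by lia.
    replace (2 * h + 1)%nat with (S (2 * h)) by lia.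
    apply Rabs_prod_eTxi_odd. lia.
Qed.

Lemma eTxi_zeros_0mod4 t : (1 <= t)%nat ->
  eTxi (4 * t) (2 * t) = 0 /\
  forall j, (1 <= j <= 4 * t - 1)%nat -> j <> (2 * t)%nat -> eTxi (4 * t) j <> 0.
Proof.
  intros Ht. set (m := (4 * t - 1)%nat).
  replace (4 * t)%nat with (S m) by (unfold m; lia).
  split.
  - rewrite eTxi_quarter by (unfold m; lia).
    unfold alt_sign. replace (2 * t - 1)%nat with (S (2 * (t - 1))) by lia.
    rewrite pow_1_odd. field.
  - intros j Hj Hne Hzero. apply eTxi_eq0_middle in Hzero; unfold m in *; lia.
Qed.

Lemma Rabs_eq_pos_sign x K : 0 < K -> Rabs x = K ->
  (exists s, (s = 1 \/ s = -1) /\ x = s * K) /\ x <> 0.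
Proof.
  intros HK Habs. split; [|intros ->; rewrite Rabs_R0 in Habs; lra].
  destruct (Rle_or_lt 0 x) as [Hx | Hx].
  - exists 1. split; [now left|]. rewrite Rabs_pos_eq in Habs by lra. lra.
  - exists (-1). split; [now right|]. rewrite Rabs_left in Habs by lra. lra.
Qed.

Theorem lemma4p3 (n : nat) (hn : (4 <= n)%nat) :
  (Nat.modulo n 4 <> 0%nat ->
     (exists s : R, (s = 1 \/ s = -1) /\
        prod_from1 (n - 1) (fun j => eTxi n j) = s * powerRZ 2 (1 - Z.of_nat (ceil_half n))%Z)
     /\ prod_from1 (n - 1) (fun j => eTxi n j) <> 0)
  /\
  (Nat.modulo n 4 = 0%nat ->
     eTxi n (Nat.div n 2) = 0 /\
     forall j : nat, (1 <= j <= n - 1)%nat -> j <> Nat.div n 2 -> eTxi n j <> 0).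
Proof.
  split; intros Hmod.
  - apply Rabs_eq_pos_sign; [apply powerRZ_lt; lra|].
    apply Rabs_prod_eTxi_not0mod4; assumption.
  - pose proof (Nat.div_mod_eq n 4).
    assert (Hhalf : Nat.div n 2 = (2 * (n / 4))%nat)
      by (symmetry; apply (Nat.div_unique _ _ _ 0); lia).
    rewrite Hhalf. set (t := (n / 4)%nat) in *. clearbody t.
    replace n with (4 * t)%nat by lia.
    apply eTxi_zeros_0mod4. lia.
Qed.
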